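(* Let $G(\mathcal V,\mathcal E)$ be a finite simple directed graph with $n=|\mathcal V|\ge 2$ nodes and let $f\ge 0$ be an integer. Byzantine consensus (with binary inputs, tolerating up to $f$ Byzantine faulty nodes) is possible in $G(\mathcal V,\mathcal E)$ if and only if for every partition $A,B,F$ of $\mathcal V$ with $A$ and $B$ both non-empty and $0\le |F|\le f$, either $A \Rightarrow_{\mathcal V - F} B$ or $B \Rightarrow_{\mathcal V - F} A$.
   Context: Network model: $G(\mathcal V,\mathcal E)$ is a simple directed graph without self-loops; node $i$ can send messages directly to node $j$ if and only if $(i,j)\in\mathcal E$. The system is synchronous, links are reliable, FIFO and deliver each message exactly once within bounded time; the topology is known to all nodes. Each node has an input in $\{0,1\}$. Up to $f$ nodes may be Byzantine faulty: they may deviate arbitrarily from the algorithm (e.g. send inconsistent messages to different neighbors), may collude, and know the whole execution state, the algorithm and the topology. An algorithm is a correct Byzantine consensus algorithm if, for every set of at most $f$ faulty nodes, every behavior of the faulty nodes and all inputs: (Agreement) all fault-free nodes output the same value; (Validity) the output of every fault-free node equals the input of some fault-free node; (Termination) every fault-free node eventually decides on an output. ''Byzantine consensus is possible in $G$'' means that such an algorithm exists for $G$. Paths: an $(A,b)$-path (for $A\subseteq\mathcal V$, $b\notin A$) is a directed path from some node of $A$ to $b$; it ''excludes $F$'' if it contains no node of $F$. Several $(A,b)$-paths are disjoint if they pairwise share only the node $b$ (in particular their source nodes are distinct). Propagation: for pairwise disjoint $A,B,F\subseteq\mathcal V$ with $|F|\le f$, we write $A \Rightarrow_{\mathcal V -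 F} B$ (''$A$ propagates in $\mathcal V-F$ to $B$'') if either $B=\emptyset$, or for every $b\in B$ there exist at least $f+1$ pairwise disjoint $(A,b)$-paths excluding $F$. *)

From mathcomp Require Import all_boot.
Set Implicit Arguments. Unset Strict Implicit. Unset Printing Implicit Defensive.

(* Nodes: a finite type T; edges: e : rel T, (i,j) is an edge iff e i j.
   A simple directed graph without self-loops is an irreflexive relation. *)

Definition is_Abpath (T : finType) (e : rel T) (A : {set T}) (b : T)
    (s : seq T) : Prop :=
  match s with
  | [::] => False
  | x :: p => [/\ x \in A, path e x p, last x p = b & uniq (x :: p)]
  end.

Definition excludes (T : finType) (F : {set T}) (s : seq T) : bool :=
  all (fun x => x \notin F) s.

(* A =>_{V - F} B : B empty, or every b in B has f+1 pairwise disjoint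
   (A,b)-paths excluding F (pairwise sharing only the node b). *)
Definition propagates (T : finType) (e : rel T) (f : nat)
    (F A B : {set T}) : Prop :=
  B = set0 \/
  forall b, b \in B ->
    exists P : 'I_f.+1 -> seq T,
      (forall k, is_Abpath e A b (P k) /\ excludes F (P k)) /\
      (forall k l, k != l -> forall x, x \in P k -> x \in P l -> x = b).

(* A deterministic synchronous algorithm: each node i has a local state
   (which may record the round number), an initial state depending on
   its identity and binary input, a message it sends in each round to each
   out-neighbour, a state transition on the messages received from its
   in-neighbours (None for non-neighbours), and a decision function. *)
Record algorithm (T : finType) := Algorithm {
  state_t : Type;
  msg_t : Type;
  init : T -> bool -> state_t;
  send : T -> state_t -> T -> msg_t;
  trans : T -> state_t -> (T -> option msg_t) -> state_t;
  decide : T -> state_t -> option bool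
}.

(* Since the
   execution is deterministic, quantifying over all such adv covers every
   (adaptive, colluding, omniscient) Byzantine behaviour. *)
Fixpoint exec (T : finType) (e : rel T) (alg : algorithm T) (F : {set T})
    (adv : nat -> T -> T -> msg_t alg) (input : T -> bool) (r : nat)
    : T -> state_t alg :=
  match r with
  | 0 => fun i => @init T alg i (input i)
  | r'.+1 => fun i =>
      @trans T alg i (exec e F adv input r' i)
        (fun k => if e k i then
                    Some (if k \in F then adv r' k i
                          else @send T alg k (exec e F adv input r' k) i)
                  else None)
  end.

(* node i (irrevocably) decides b: its first decision is b *)
Definition decides (T : finType) (e : rel T) (alg : algorithm T)
    (F : {set T}) (adv : nat -> T -> T -> msg_t alg) (input : T -> bool)
    (i : T) (b : bool) : Prop :=
  exists r, @decide T alg i (exec e F adv input r i) = Some b /\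
            forall r', r' < r -> @decide T alg i (exec e F adv input r' i) = None.

Definition correct_byz_consensus (T : finType) (e : rel T) (f : nat)
    (alg : algorithm T) : Prop :=
  forall (F : {set T}), #|F| <= f ->
  forall (adv : nat -> T -> T -> msg_t alg) (input : T -> bool),
    (forall i, i \notin F -> exists b, decides e F adv input i b) /\
    (forall i j b c, i \notin F -> j \notin F ->
       decides e F adv input i b -> decides e F adv input j c ->
       b = c) /\
    (forall i b, i \notin F -> decides e F adv input i b ->
       exists j, j \notin F /\ input j = b).

Definition byz_consensus_possible (T : finType) (e : rel T) (f : nat) : Prop :=
  exists alg : algorithm T, correct_byz_consensus e f alg.

From Stdlib Require Import Classical ClassicalEpsilon FunctionalExtensionality.
From mathcomp Require Import all_boot.
Set Implicit Arguments. Unset Strict Implicit. Unset Printing Implicit Defensive.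

(* If neither [A] nor [B] propagates to the other, Menger's theorem gives nodes
   [b] in [B] and [a] in [A], sets [C1], [C2] of at most [f] nodes, and disjoint sets [L]
   containing [b] and [M] containing [a] such that [L] only hears from [L], [F] and [C1], and
   [M] only from [M], [F] and [C2].  Let [F] be faulty, inputs be [true] exactly on [L], and
   let [F] show [L] what it does in the all-[true] run with faulty [C1] and everybody else
   what it does in the all-[false] run with faulty [C2].  Then [b] cannot distinguish this
   run from the first, nor [a] from the second: by validity [b] decides [true] and [a]
   decides [false].

   The algorithm runs two phases for every candidate fault set [F].  In a phase
   all values are flooded along all paths; then every node, pretending [F] is the fault set,
   computes from the values of the source component of [G - F] a target value and adopts it
   if [f+1] disjoint paths vouch for it.  Some of these paths avoid the actual faulty nodes,
   so values always come from fault-free nodes (validity).  In the first of the two phases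
   where [F] is the actual fault set, the propagation condition on the source component split
   by values either makes all fault-free nodes agree, or turns the whole source component to
   [true], which the second phase then spreads to every fault-free node (agreement). *)


Section Connectivity.
Variable T : finType.
Implicit Types (r : rel T) (S Q Z : {set T}).

Definition avoid r Z : rel T := fun u v => [&& r u v, u \notin Z & v \notin Z].
Definition inside r Q : rel T := fun u v => [&& r u v, u \in Q & v \in Q].
Definition converse r : rel T := fun u v => r v u.

Lemma disjointP (A B : {set T}) :
  reflect (forall v, v \in A -> v \in B -> False) [disjoint A & B].
Proof.
apply: (iffP idP) => [h v ha hb | h]; first by rewrite (disjointFr h ha) in hb.
rewrite -setI_eq0; apply/eqP/setP => v; rewrite !inE; apply/negP => /andP[ha hb].
exact: h v ha hb.
Qed.

Lemma connect_mono r1 r2 : subrel r1 r2 -> forall a b, connect r1 a b -> connect r2 a b.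
Proof. by move=> H; apply: connect_sub => u v /H; apply: connect1. Qed.

Lemma connect_first r a b : connect r a b -> a = b \/ exists c, r a c.
Proof.
case/connectP=> [[|c p]] /=; first by move=> _ ->; left.
by case/andP=> h _ _; right; exists c.
Qed.

Lemma connect_last r a b : connect r a b -> a = b \/ exists c, r c b.
Proof.
move=> h; have h' : connect [rel x y | r y x] b a by rewrite connect_rev.
case/connect_first: h' => [->|[c hc]]; [by left | by right; exists c].
Qed.

Lemma connect_inside_converse r Q a b :
  connect (inside (converse r) Q) a b = connect (inside r Q) b a.
Proof.
have E : inside (converse r) Q =2 [rel x y | inside r Q y x].
  by move=> u v /=; rewrite /inside /converse; case: (u \in Q); case: (v \in Q);
     rewrite ?andbT ?andbF.
by rewrite (eq_connect E) connect_rev.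
Qed.

Lemma connect_avoid_out r Z a b : connect (avoid r Z) a b -> a \notin Z -> b \notin Z.
Proof. by move=> hc ha; case: (connect_last hc) => [<-//|[c /and3P[]]]. Qed.

Lemma connect_inside_out r Q a b : connect (inside r Q) a b -> a \notin Q -> a = b.
Proof. by case/connect_first=> // [[c /and3P[_ h _]]] /negP. Qed.

Lemma path_closed_mem r (P : pred T) a p : path r a p -> P a ->
  (forall u v, r u v -> P v) -> forall v, v \in a :: p -> P v.
Proof.
elim: p a => [|c p IH] a /=; first by move=> _ Pa _ v; rewrite inE => /eqP->.
case/andP=> hac hp Pa H v; rewrite inE => /orP[/eqP->//|].
by apply: IH => //; apply: H hac.
Qed.

Lemma path_avoid r Z x q : path r x q -> all (fun v => v \notin Z) (x :: q) ->
  path (avoid r Z) x q.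
Proof.
elim: q x => [//|y q IH] x /= /andP[hxy hp] /and3P[hx hy ha].
by rewrite /avoid hxy hx hy /=; apply: IH => //=; rewrite hy.
Qed.

Lemma path_first_hit r S a p : path r a p ->
  (a \notin S /\ last a p \notin S /\ connect (avoid r S) a (last a p)) \/
  exists s, [/\ s \in S, s \in a :: p & connect (fun u v => r u v && (u \notin S)) a s].
Proof.
elim: p a => [|c p IH] a /=.
  move=> _; case: (boolP (a \in S)) => ha.
    by right; exists a; rewrite mem_head connect0.
  by left; rewrite connect0.
case/andP=> hac hp; case: (boolP (a \in S)) => ha.
  by right; exists a; rewrite mem_head connect0.
case: (IH c hp) => [[hc [hl hcon]]|[s [hs hsin hcon]]].
  left; split=> //; split=> //; apply: connect_trans hcon; apply: connect1.
  by rewrite /avoid hac ha hc.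
right; exists s; split=> //; first by rewrite inE hsin orbT.
by apply: connect_trans hcon; apply: connect1; rewrite hac ha.
Qed.

Lemma path_last_hit r S a p : path r a p ->
  (a \notin S /\ last a p \notin S /\ connect (avoid r S) a (last a p)) \/
  exists s, [/\ s \in S, s \in a :: p & connect (fun u v => r u v && (v \notin S)) s (last a p)].
Proof.
elim: p a => [|c p IH] a /=.
  move=> _; case: (boolP (a \in S)) => ha.
    by right; exists a; rewrite mem_head connect0.
  by left; rewrite connect0.
case/andP=> hac hp; case: (IH c hp) => [[hc [hl hcon]]|[s [hs hsin hcon]]].
  case: (boolP (a \in S)) => ha.
    right; exists a; split; rewrite ?mem_head //.
    apply: (@connect_trans _ _ c); first by apply: connect1; rewrite hac hc.
    by apply: connect_mono hcon => u v /and3P[-> _ ->].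
  left; split=> //; split=> //; apply: connect_trans hcon; apply: connect1.
  by rewrite /avoid hac ha hc.
by right; exists s; split=> //; rewrite inE hsin orbT.
Qed.

End Connectivity.

Section Menger.
Variable T : finType.
Implicit Types (r : rel T) (X Y Z W S Q : {set T}).

Definition separates r X Y Z := forall x y, x \in X -> y \in Y -> x \notin Z -> y \notin Z ->
  ~~ connect (avoid r Z) x y.

(* Vertex-disjoint [X]-[Y] paths, represented by their vertex sets. *)
Definition linkage r X Y k (Q : 'I_k -> {set T}) :=
  (forall i, exists x y, [/\ x \in X, y \in Y, x \in Q i, y \in Q i &
                            connect (inside r (Q i)) x y]) /\
  (forall i j, i != j -> [disjoint Q i & Q j]).

Definition num_edges r := #|[set p : T * T | r p.1 p.2]|.

Definition del_edge r x y : rel T := fun u v => r u v && ((u, v) != (x, y)).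

Lemma linkage_mono r1 r2 X Y k (Q : 'I_k -> {set T}) :
  subrel r1 r2 -> linkage r1 X Y Q -> linkage r2 X Y Q.
Proof.
move=> H [h1 h2]; split=> // i; have [x [y [hx hy hxQ hyQ hc]]] := h1 i.
exists x, y; split=> //; apply: connect_mono hc => u v /and3P[/H h hu hv].
by rewrite /inside h hu hv.
Qed.

(* Without edges, [X :&: Y] is a separator and its points are trivial links. *)
Lemma menger_no_edges r X Y k : (forall u v, ~~ r u v) ->
  (forall Z, separates r X Y Z -> k <= #|Z|) -> exists Q : 'I_k -> {set T}, linkage r X Y Q.
Proof.
move=> H0 H.
have hsep : separates r X Y (X :&: Y).
  move=> x y hx hy hnx _; apply/negP => /connect_first [exy|[c /and3P[hc _ _]]].
  - by move: hnx; rewrite inE hx exy hy.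
  - by move: (H0 x c); rewrite hc.
have hk := H _ hsep.
exists (fun i => [set enum_val (widen_ord hk i)]); split.
  move=> i; set z := enum_val _; have : z \in X :&: Y by apply: enum_valP.
  by rewrite inE => /andP[hx hy]; exists z, z; split; rewrite ?set11 ?connect0.
move=> i j hij; rewrite disjoints1 inE; apply/negP => /eqP /enum_val_inj h.
have := congr1 val h => /= hv; move/negP: hij; apply; apply/eqP; exact: val_inj.
Qed.

Definition tight r X S Q (x s : T) :=
  [/\ x \in X, x \in Q, Q :&: S = [set s], connect (inside r Q) x s &
      forall v, v \in Q -> v \notin S -> connect (inside r (Q :\: S)) x v].

Lemma tight_end r X S Q x s : tight r X S Q x s -> s \in Q /\ s \in S.
Proof.
case=> _ _ hI _ _; have : s \in Q :&: S by rewrite hI set11.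
by rewrite inE => /andP.
Qed.

Lemma tight_meet r X S Q x s v : tight r X S Q x s -> v \in Q -> v \in S -> v = s.
Proof.
case=> _ _ hI _ _ hv hvS; have : v \in Q :&: S by rewrite inE hv hvS.
by rewrite hI inE => /eqP.
Qed.

Lemma tight_path r S Q a p : path (inside r Q) a p -> a \in Q -> has (mem S) (a :: p) ->
  exists Q' s, Q' \subset Q /\ tight r [set a] S Q' a s.
Proof.
have single a' : a' \in S -> tight r [set a'] S [set a'] a' a'.
  move=> haS; split; rewrite ?set11 ?connect0 //.
    by apply/setIidPl; rewrite sub1set.
  by move=> v; rewrite inE => /eqP-> /negP.
elim: p a => [|c p IH] a hp haQ hhas.
  have haS : a \in S by move: hhas => /= /orP[//|].
  by exists [set a], a; rewrite sub1set haQ; split => //; apply: single.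
case: (boolP (a \in S)) => haS.
  by exists [set a], a; rewrite sub1set haQ; split => //; apply: single.
move: hp => /= /andP[hac hp]; have hcQ : c \in Q by case/and3P: hac.
have hhas' : has (mem S) (c :: p) by move: hhas => /= /orP[h|//]; rewrite h in haS.
have [Q'' [s [hsub [_ hcQ'' hI hcon hrest]]]] := IH c hp hcQ hhas'.
have hac' : r a c by case/and3P: hac.
exists (a |: Q''), s; split; first by rewrite subUset sub1set haQ hsub.
split; rewrite ?set11 ?setU11 //.
- apply/setP=> v; rewrite -hI !inE; case: (v =P a) => [->|] //=.
  by rewrite (negbTE haS) andbF.
- apply: (@connect_trans _ _ c); first by apply: connect1; rewrite /inside hac' setU11 setU1r.
  by apply: connect_mono hcon => u v /and3P[h h1 h2]; rewrite /inside h !inE h1 h2 !orbT.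
- move=> v /setU1P[-> _|hv hvS]; first exact: connect0.
  have hc := hrest v hv hvS.
  have hcS : c \notin S.
    apply/negP=> hcS; have := connect_inside_out hc; rewrite inE hcS /= => /(_ isT) hcv.
    by move: hvS; rewrite -hcv hcS.
  apply: (@connect_trans _ _ c); first apply: connect1.
    by rewrite /inside hac' !inE haS hcS eqxx /= hcQ'' orbT.
  apply: connect_mono hc => u w /and3P[h h1 h2]; move: h1 h2; rewrite /inside h !inE.
  by case/andP=> -> -> /andP[-> ->]; rewrite !orbT.
Qed.

Lemma tighten r X S Q x c : x \in X -> x \in Q -> c \in S -> connect (inside r Q) x c ->
  exists Q' s, Q' \subset Q /\ tight r X S Q' x s.
Proof.
move=> hx hxQ hc /connectP [p hp hl].
have hh : has (mem S) (x :: p) by apply/hasP; exists c; rewrite // hl mem_last.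
have [Q' [s [hsub [_ h2 h3 h4 h5]]]] := tight_path hp hxQ hh.
by exists Q', s; split => //; split.
Qed.

Lemma tight_linkage r X S k (Q : 'I_k -> {set T}) : linkage r X S Q ->
  exists (Q' : 'I_k -> {set T}) (x' s' : 'I_k -> T),
    (forall i, tight r X S (Q' i) (x' i) (s' i)) /\
    (forall i i' v, v \in Q' i -> v \in Q' i' -> i = i').
Proof.
move=> [hQ hQd].
have hT i : exists d : {set T} * (T * T), d.1 \subset Q i /\ tight r X S d.1 d.2.1 d.2.2.
  have [x0 [c [hx0 hc hx0Q hcQ hcon]]] := hQ i.
  by have [Q' [s [hs1 hs2]]] := tighten hx0 hx0Q hc hcon; exists (Q', (x0, s)).
have [d hd] := fin_all_exists hT.
exists (fun i => (d i).1), (fun i => (d i).2.1), (fun i => (d i).2.2).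
split=> [i|i i' v h h']; first by case: (hd i).
apply/eqP; apply/negPn/negP => hne; case: (hd i) => s _; case: (hd i') => s' _.
by move/disjointP: (hQd i i' hne); apply; [exact: subsetP s _ h | exact: subsetP s' _ h'].
Qed.

Lemma linkage_converse r X Y k (Q : 'I_k -> {set T}) :
  linkage r X Y Q -> linkage (converse r) Y X Q.
Proof.
move=> [hQ hQd]; split=> // i; have [a [b [ha hb haQ hbQ hc]]] := hQ i.
by exists b, a; rewrite connect_inside_converse.
Qed.

(* Gluing: linkages [Q1] from [X] to [x |: Z] and [Q2] from [y |: Z] to [Y] in a subgraph [r']
   are matched along [Z], and the component ending at [x] is joined through the edge [(x, y)]
   to the one starting at [y]. *)
Section Glue.
Variables (r r' : rel T) (X Y Z : {set T}) (x y : T) (k : nat).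
Hypothesis r'_sub : subrel r' r.
Hypothesis rxy : r x y.
Hypothesis sepZ : separates r' X Y Z.
Hypotheses (xZ : x \notin Z) (yZ : y \notin Z) (cardZ : #|Z| = k).
Variables (Q1 Q2 : 'I_k.+1 -> {set T}) (x1 s1 y2 t2 : 'I_k.+1 -> T).
Hypothesis tight1 : forall i, tight r' X (x |: Z) (Q1 i) (x1 i) (s1 i).
Hypothesis tight2 : forall j, tight (converse r') Y (y |: Z) (Q2 j) (y2 j) (t2 j).
Hypothesis disj1 : forall i i' v, v \in Q1 i -> v \in Q1 i' -> i = i'.
Hypothesis disj2 : forall j j' v, v \in Q2 j -> v \in Q2 j' -> j = j'.

Lemma t2_inj : injective t2.
Proof.
move=> i i' h; apply: (disj2 (v := t2 i)); first by case: (tight_end (tight2 i)).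
by rewrite h; case: (tight_end (tight2 i')).
Qed.

Lemma t2_onto t : t \in y |: Z -> exists j, t2 j = t.
Proof.
move=> ht.
have hsub : [set t2 j | j in 'I_k.+1] \subset y |: Z.
  by apply/subsetP => z /imsetP [j _ ->]; case: (tight_end (tight2 j)).
have /eqP E : [set t2 j | j in 'I_k.+1] == y |: Z.
  by rewrite eqEcard hsub (card_imset _ t2_inj) card_ord cardsU1 yZ cardZ leqnn.
by rewrite -E in ht; case/imsetP: ht => j _ ->; exists j.
Qed.

Definition glue_target i := if s1 i == x then y else s1 i.

Lemma glue_target_mem i : glue_target i \in y |: Z.
Proof.
rewrite /glue_target; case: eqP => [_|hne]; first by rewrite setU11.
have : s1 i \in x |: Z by case: (tight_end (tight1 i)).
by rewrite !inE => /orP[/eqP//|hz]; rewrite hz orbT.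
Qed.

Variable jj : 'I_k.+1 -> 'I_k.+1.
Hypothesis jjE : forall i, t2 (jj i) = glue_target i.

Lemma jj_inj : injective jj.
Proof.
move=> i i' h; have : glue_target i = glue_target i' by rewrite -!jjE h.
have s1S i0 : s1 i0 \in x |: Z by case: (tight_end (tight1 i0)).
have s1Q i0 : s1 i0 \in Q1 i0 by case: (tight_end (tight1 i0)).
rewrite /glue_target; case: eqP => [e1|/eqP ne1]; case: eqP => [e2|/eqP ne2].
+ by move=> _; apply: (disj1 (s1Q i)); rewrite e1 -e2.
+ by move=> ey; move: (s1S i'); rewrite !inE (negbTE ne2) /= -ey (negbTE yZ).
+ by move=> ey; move: (s1S i); rewrite !inE (negbTE ne1) /= ey (negbTE yZ).
+ by move=> e; apply: (disj1 (s1Q i)); rewrite e.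
Qed.

Lemma connect_from_x1 a v : v \in Q1 a -> v \notin Z -> connect (avoid r' Z) (x1 a) v.
Proof.
move=> hv1 hvZ; case: (tight1 a) => _ _ hI1 hc1 hr1.
case: (boolP (v \in x |: Z)) => hvS.
  have ev := tight_meet (tight1 a) hv1 hvS.
  have noZ u : u \in Q1 a -> u \notin Z.
    move=> hu; apply/negP => huZ; have eu := tight_meet (tight1 a) hu (setU1r x huZ).
    by move: hvZ; rewrite ev -eu huZ.
  rewrite ev; apply: connect_mono hc1 => u w /and3P[h hu hw].
  by rewrite /avoid h (noZ u hu) (noZ w hw).
apply: connect_mono (hr1 v hv1 hvS) => u w /and3P[h hu hw].
by move: hu hw; rewrite /avoid h !inE !negb_or => /andP[/andP[_ ->] _] /andP[/andP[_ ->] _].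
Qed.

Lemma connect_to_y2 b v : v \in Q2 b -> v \notin Z -> connect (avoid r' Z) v (y2 b).
Proof.
move=> hv2 hvZ; case: (tight2 b) => _ _ hI2 hc2 hr2.
rewrite connect_inside_converse in hc2.
case: (boolP (v \in y |: Z)) => hvS.
  have ev := tight_meet (tight2 b) hv2 hvS.
  have noZ u : u \in Q2 b -> u \notin Z.
    move=> hu; apply/negP => huZ; have eu := tight_meet (tight2 b) hu (setU1r y huZ).
    by move: hvZ; rewrite ev -eu huZ.
  rewrite ev; apply: connect_mono hc2 => u w /and3P[h hu hw].
  by rewrite /avoid h (noZ u hu) (noZ w hw).
have := hr2 v hv2 hvS; rewrite connect_inside_converse.
apply: connect_mono => u w /and3P[h hu hw].
by move: hu hw; rewrite /avoid h !inE !negb_or => /andP[/andP[_ ->] _] /andP[/andP[_ ->] _].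
Qed.

(* Outside its match, a component of [Q1] meets no component of [Q2]: a common vertex in
   [Z] would identify their endpoints, one outside [Z] would bypass the separator [Z]. *)
Lemma glue_cross a b v : b != jj a -> v \in Q1 a -> v \in Q2 b -> False.
Proof.
move=> hb hv1 hv2.
case: (boolP (v \in Z)) => hvZ.
  have e1 := tight_meet (tight1 a) hv1 (setU1r x hvZ).
  have e2 := tight_meet (tight2 b) hv2 (setU1r y hvZ).
  have : glue_target a = t2 b.
    rewrite /glue_target -e1 -e2; case: eqP => [evx|//].
    by move: xZ; rewrite -evx hvZ.
  by rewrite -jjE => /t2_inj hab; move: hb; rewrite hab eqxx.
have c1 := connect_from_x1 hv1 hvZ; have c2 := connect_to_y2 hv2 hvZ.
have hxa : x1 a \notin Z by case: (connect_first c1) => [->//|[c /and3P[]]].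
have hyb : y2 b \notin Z by case: (connect_last c2) => [<-//|[c /and3P[]]].
case: (tight1 a) (tight2 b) => hxX _ _ _ _ [hyY _ _ _ _].
by move: (sepZ hxX hyY hxa hyb); rewrite (connect_trans c1 c2).
Qed.

Lemma glue_linkage : linkage r X Y (fun i => Q1 i :|: Q2 (jj i)).
Proof.
split.
  move=> i; case: (tight1 i) => hxX hxQ _ hc1 _; case: (tight_end (tight1 i)) => hsQ _.
  case: (tight2 (jj i)) => hyY hyQ _ hc2 _; case: (tight_end (tight2 (jj i))) => htQ _.
  rewrite connect_inside_converse in hc2.
  exists (x1 i), (y2 (jj i)); split => //; rewrite ?inE ?hxQ ?hyQ ?orbT //.
  have m1 : subrel (inside r' (Q1 i)) (inside r (Q1 i :|: Q2 (jj i))).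
    by move=> u w /and3P[/r'_sub h hu hw]; rewrite /inside h !inE hu hw.
  have m2 : subrel (inside r' (Q2 (jj i))) (inside r (Q1 i :|: Q2 (jj i))).
    by move=> u w /and3P[/r'_sub h hu hw]; rewrite /inside h !inE hu hw !orbT.
  apply: (connect_trans (connect_mono m1 hc1)).
  apply: connect_trans (connect_mono m2 hc2).
  move: htQ; rewrite jjE /glue_target; case: eqP => [ex htQ|_ _]; last exact: connect0.
  apply: connect1; rewrite /inside ex rxy !inE htQ orbT andbT /=.
  by rewrite -ex hsQ.
move=> i i' hne; apply/disjointP => v; rewrite !inE => /orP[h1|h1] /orP[h2|h2].
- by move: hne; rewrite (disj1 h1 h2) eqxx.
- apply: (glue_cross (b := jj i')) h1 h2; apply: contra hne => /eqP h.
  by apply/eqP; apply: jj_inj.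
- apply: (glue_cross (b := jj i)) h2 h1; apply: contra hne => /eqP h.
  by apply/eqP; symmetry; apply: jj_inj.
- by move: hne; rewrite (jj_inj (disj2 h1 h2)) eqxx.
Qed.

End Glue.

(* The inductive step of Menger's theorem: if deleting the edge [(x, y)] creates a separator
   [Z] with at most [k] vertices, then [x |: Z] and [y |: Z] separate in [r], and linkages
   from [X] to [x |: Z] and from [y |: Z] to [Y] (by induction) glue together. *)
Section MengerStep.
Variables (r : rel T) (x y : T) (X Y Z : {set T}) (k : nat).
Local Notation r' := (del_edge r x y).
Hypothesis rxy : r x y.
Hypothesis sepZ : separates r' X Y Z.
Hypothesis cardZ : #|Z| <= k.
Hypothesis sep_large : forall W, separates r X Y W -> k.+1 <= #|W|.

Lemma del_edge_sub : subrel r' r.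
Proof. by move=> u v /andP[]. Qed.

(* A path avoiding [x] or [y] does not use the deleted edge. *)
Lemma separates_add_end z : z \in [set x; y] -> separates r X Y (z |: Z).
Proof.
move=> hz a b ha hb na nb; apply/negP => hc.
have na' : a \notin Z by move: na; rewrite !inE negb_or => /andP[].
have nb' : b \notin Z by move: nb; rewrite !inE negb_or => /andP[].
move: (sepZ ha hb na' nb') => /negP; apply; apply: connect_mono hc.
move=> u v /and3P[huv hu hv]; move: hu hv; rewrite !inE !negb_or.
move=> /andP[huz huZ] /andP[hvz hvZ]; rewrite /avoid /del_edge huv huZ hvZ /= andbT.
rewrite xpair_eqE negb_and; move: hz; rewrite !inE => /orP[] /eqP <-.
  by rewrite huz.
by rewrite hvz orbT.
Qed.

Lemma separator_tight : [/\ x \notin Z, y \notin Z & #|Z| = k].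
Proof.
have hk1 := sep_large (separates_add_end (set21 x y)).
have hk2 := sep_large (separates_add_end (set22 x y)).
rewrite cardsU1 in hk1; rewrite cardsU1 in hk2.
have hxZ : x \notin Z.
  move: hk1; case: (x \in Z) => //=; rewrite add0n => h.
  by move: (leq_trans h cardZ); rewrite ltnn.
have hyZ : y \notin Z.
  move: hk2; case: (y \in Z) => //=; rewrite add0n => h.
  by move: (leq_trans h cardZ); rewrite ltnn.
split=> //; apply/eqP; rewrite eqn_leq cardZ.
by move: hk1; rewrite hxZ add1n ltnS.
Qed.

Lemma avoid_path_mem W a p : path (avoid r W) a p -> a \notin W ->
  forall v, v \in a :: p -> v \notin W.
Proof.
move=> hp ha; apply: (path_closed_mem (P := fun v => v \notin W)) hp ha _.
by move=> u v /and3P[].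
Qed.

(* An [X]-[Y] path of [r] avoiding [W] has a prefix in [r'] from [X] to [x |: Z]. *)
Lemma separates_head_large W : separates r' X (x |: Z) W -> k.+1 <= #|W|.
Proof.
move=> hW; apply: sep_large => a b ha hb na nb; apply/negP => /connectP [p hp hl].
case: (path_first_hit (x |: Z) hp) => [[h1 [h2 h3]]|[s [hs hsin hc]]].
- rewrite -hl in h2 h3; move: (separates_add_end (set21 x y) ha hb h1 h2) => /negP.
  by apply; apply: connect_mono h3 => u v /and3P[/and3P[h _ _] q1 q2]; rewrite /avoid h q1 q2.
- have hsW := avoid_path_mem hp na hsin.
  move: (hW a s ha hs na hsW) => /negP; apply; apply: connect_mono hc.
  move=> u v /andP[/and3P[huv hu hv] huS]; apply/and3P; split => //.
  apply/andP; split => //; rewrite xpair_eqE negb_and.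
  by move: huS; rewrite !inE negb_or => /andP[-> _].
Qed.

Lemma separates_tail_large W : separates r' (y |: Z) Y W -> k.+1 <= #|W|.
Proof.
move=> hW; apply: sep_large => a b ha hb na nb; apply/negP => /connectP [p hp hl].
case: (path_last_hit (y |: Z) hp) => [[h1 [h2 h3]]|[s [hs hsin hc]]].
- rewrite -hl in h2 h3; move: (separates_add_end (set22 x y) ha hb h1 h2) => /negP.
  by apply; apply: connect_mono h3 => u v /and3P[/and3P[h _ _] q1 q2]; rewrite /avoid h q1 q2.
- have hsW := avoid_path_mem hp na hsin.
  rewrite -hl in hc.
  move: (hW s b hs hb hsW nb) => /negP; apply; apply: connect_mono hc.
  move=> u v /andP[/and3P[huv hu hv] hvS]; apply/and3P; split => //.
  apply/andP; split => //; rewrite xpair_eqE negb_and.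
  by move: hvS; rewrite !inE negb_or => /andP[-> _]; rewrite orbT.
Qed.

Hypothesis IH : forall X' Y', (forall W, separates r' X' Y' W -> k.+1 <= #|W|) ->
  exists Q : 'I_k.+1 -> {set T}, linkage r' X' Y' Q.

Lemma menger_step : exists Q : 'I_k.+1 -> {set T}, linkage r X Y Q.
Proof.
have [hxZ hyZ hcZ] := separator_tight.
have [Q1 hQ1] := IH separates_head_large.
have [Q2 hQ2] := IH separates_tail_large.
have [Q1' [x1 [s1 [tight1 disj1]]]] := tight_linkage hQ1.
have [Q2' [y2 [t2 [tight2 disj2]]]] := tight_linkage (linkage_converse hQ2).
have [jj hjj] := fin_all_exists (fun i => t2_onto hyZ hcZ tight2 disj2
                                   (glue_target_mem y tight1 i)).
by exists (fun i => Q1' i :|: Q2' (jj i));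
   apply: (glue_linkage del_edge_sub rxy sepZ hxZ hyZ tight1 tight2 disj1 disj2 hjj).
Qed.

End MengerStep.

Lemma menger_ind n : forall r, num_edges r <= n -> forall X Y k,
  (forall Z, separates r X Y Z -> k <= #|Z|) -> exists Q : 'I_k -> {set T}, linkage r X Y Q.
Proof.
have no_edges r : num_edges r = 0 -> forall u v, ~~ r u v.
  move=> h0 u v; apply/negP => huv.
  have : (u, v) \in [set p : T * T | r p.1 p.2] by rewrite inE.
  by move: h0 => /eqP; rewrite cards_eq0 => /eqP ->; rewrite inE.
elim: n => [|n IH] r hn X Y k H.
  by apply: menger_no_edges H; apply: no_edges; apply/eqP; rewrite -leqn0.
case: (set_0Vmem [set p : T * T | r p.1 p.2]) => [h0|[[x y]]].
  by apply: menger_no_edges H; apply: no_edges; rewrite /num_edges h0 cards0.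
rewrite inE /= => rxy.
case: k H => [|k] H; first by exists (fun i => set0); split=> -[].
have hr' : num_edges (del_edge r x y) <= n.
  rewrite -ltnS; apply: leq_trans hn; apply: proper_card; apply/properP; split.
    by apply/subsetP => [[u v]]; rewrite !inE /del_edge => /andP[].
  by exists (x, y); rewrite !inE /del_edge /= ?eqxx ?andbF ?rxy.
case: (classic (forall Z, separates (del_edge r x y) X Y Z -> k.+1 <= #|Z|)) => [H'|Hn].
  have [Q hQ] := IH _ hr' X Y k.+1 H'; exists Q.
  by apply: linkage_mono hQ; apply: del_edge_sub.
have [Z [hsepZ hZ]] : exists Z, separates (del_edge r x y) X Y Z /\ #|Z| <= k.
  apply: NNPP => Hc; apply: Hn => Z hs; rewrite ltnNge; apply/negP => hle.
  by apply: Hc; exists Z.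
by apply: (menger_step rxy hsepZ hZ H) => X' Y'; apply: IH.
Qed.

Theorem menger r X Y k : (forall Z, separates r X Y Z -> k <= #|Z|) ->
  exists Q : 'I_k -> {set T}, linkage r X Y Q.
Proof. exact: (@menger_ind (num_edges r) r (leqnn _)). Qed.

End Menger.

Section Fans.
Variables (T : finType) (e : rel T) (f : nat).

(* [propagates e f F A B] unfolds to [B = set0 \/ forall b, b \in B -> fan A F b]. *)
Definition fan (A F : {set T}) (b : T) :=
  exists P : 'I_f.+1 -> seq T,
    (forall k, is_Abpath e A b (P k) /\ excludes F (P k)) /\
    (forall k l, k != l -> forall x, x \in P k -> x \in P l -> x = b).

Definition shielded (L F C : {set T}) :=
  [/\ [disjoint L & F], [disjoint L & C], [disjoint F & C] &
      forall u v, e u v -> v \in L -> [|| u \in L, u \in F | u \in C]].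

Hypothesis Hirr : irreflexive e.

(* Menger's theorem in [G - F - b], between [A] and the in-neighbours [Y] of [b]: either
   [f+1] disjoint linkages extend through [b] to a fan, or at most [f] vertices separate. *)
Section FanOrShield.
Variables (A F : {set T}) (b : T).
Hypotheses (bA : b \notin A) (bF : b \notin F) (AF : [disjoint A & F]).
Local Notation H := (avoid e (b |: F)).
Local Notation Y := [set y | e y b & y \notin F].

Lemma fan_of_linkage (Q : 'I_f.+1 -> {set T}) : linkage H A Y Q -> fan A F b.
Proof.
move=> [hQ hQd].
have hP k : exists s : seq T, [/\ is_Abpath e A b s, excludes F s &
    forall v, v \in s -> v = b \/ v \in Q k].
  have [x [y [hx hy hxQ hyQ hc]]] := hQ k.
  case/connectP: hc => p hp; case: (shortenP hp) => p' hp' hu _ hl.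
  have hall : forall v, v \in x :: p' -> [&& v != b, v \notin F & v \in Q k].
    apply: (path_closed_mem (P := fun v => [&& v != b, v \notin F & v \in Q k])) hp' _ _.
    - rewrite hxQ andbT; apply/andP; split.
        by apply/negP=> /eqP ex; move: bA; rewrite -ex hx.
      by apply/negP => hxF; have := disjointFr AF hx; rewrite hxF.
    - by move=> u v /and3P [/and3P [_ _]]; rewrite !inE negb_or => /andP[-> ->] _ ->.
  exists (x :: rcons p' b); split.
  - rewrite /is_Abpath; split => //.
    + rewrite rcons_path; apply/andP; split.
        by apply: sub_path hp' => u v /and3P[/and3P[]].
      by rewrite -hl; move: hy; rewrite inE => /andP[].
    + by rewrite last_rcons.
    + rewrite -rcons_cons rcons_uniq hu andbT; apply/negP => hbin.
      by have := hall _ hbin; rewrite eqxx.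
  - rewrite /excludes -rcons_cons all_rcons bF andTb; apply/allP => v hv.
    by case/and3P: (hall v hv).
  - move=> v; rewrite -rcons_cons mem_rcons inE => /orP[/eqP->|hv]; first by left.
    by right; case/and3P: (hall v hv).
have [P hPP] := fin_all_exists hP.
exists P; split; first by move=> k; case: (hPP k).
move=> k l hkl v hvk hvl.
case: (hPP k) => _ _ hk; case: (hPP l) => _ _ hl.
case: (hk v hvk) => // hvQk; case: (hl v hvl) => // hvQl.
by move/disjointP: (hQd k l hkl) => /(_ v hvQk hvQl).
Qed.

(* Separating vertices in [F] or equal to [b] can be dropped: [H] avoids them anyway. *)
Lemma separates_trim Z : separates H A Y Z -> separates H A Y (Z :\: F :\ b).
Proof.
move=> hsep x y hx hy nx ny; apply/negP => hc.
have xF : x \notin F by apply/negP => h; have := disjointFr AF hx; rewrite h.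
have xb : x != b by apply/negP => /eqP ex; move: bA; rewrite -ex hx.
have yF : y \notin F by move: hy; rewrite inE => /andP[].
have yb : y != b by apply/negP => /eqP ey; move: hy; rewrite inE ey Hirr.
have nx' : x \notin Z by move: nx; rewrite !inE xb xF.
have ny' : y \notin Z by move: ny; rewrite !inE yb yF.
move: (hsep x y hx hy nx' ny') => /negP; apply; apply: connect_mono hc.
move=> u v /and3P [huv hu hv]; case/and3P: (huv) => _.
rewrite !inE !negb_or => /andP[ub uF] /andP[vb vF].
move: hu hv; rewrite !inE ub uF vb vF /= => hu hv; rewrite /avoid hu hv !andbT; exact: huv.
Qed.

(* [L] is [b] together with everything reaching an in-neighbour of [b] while avoiding [F]
   and the separator [C]. *)
Lemma shield_of_separator C : separates H A Y C -> [disjoint F & C] -> b \notin C ->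
  exists L, [/\ shielded L F C, [disjoint L & A] & b \in L].
Proof.
move=> sepC FC bC.
pose L := [set u | (u == b) || [&& u \notin F, u \notin C &
   [exists y, [&& y \in Y, y \notin C & connect (avoid H C) u y]]]].
exists L; split; last by rewrite inE eqxx.
  split => //.
  - apply/disjointP => j; rewrite inE => /orP[/eqP->|/and3P[h _ _]] hj.
      by move: bF; rewrite hj.
    by rewrite hj in h.
  - apply/disjointP => j; rewrite inE => /orP[/eqP->|/and3P[_ h _]] hj.
      by move: bC; rewrite hj.
    by rewrite hj in h.
  move=> u v huv hv.
  case: (boolP (u \in F)) => uF; first by rewrite orbT.
  case: (boolP (u \in C)) => uC; first by rewrite !orbT.
  rewrite ?orbF.
  case: (u =P b) => [->|/eqP ub]; first by rewrite inE eqxx.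
  rewrite inE; apply/orP; right; apply/and3P; split => //.
  case: (v =P b) => [vb|/eqP vb].
    by apply/existsP; exists u; rewrite connect0 uC andbT inE -vb huv uF.
  move: hv; rewrite inE (negbTE vb) /= => /and3P [vF vC /existsP [y /and3P [hy yC hc]]].
  apply/existsP; exists y; rewrite hy yC /=; apply: connect_trans hc; apply: connect1.
  by rewrite /avoid huv uC vC !inE !negb_or ub uF vb vF.
apply/disjointP => j; rewrite inE.
case/orP=> [/eqP->|/and3P[jF jC /existsP [y /and3P [hy yC hc]]]].
  by move=> hbA; move: bA; rewrite hbA.
by move=> hjA; move: (sepC j y hjA hy jC yC); rewrite hc.
Qed.

Lemma fan_or_shield : ~ fan A F b ->
  exists L C : {set T}, [/\ #|C| <= f, shielded L F C, [disjoint L & A] & b \in L].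
Proof.
move=> nfan; case: (classic (exists Z, separates H A Y Z /\ #|Z| <= f)); last first.
  move=> Hc; case: nfan.
  have [Q hQ] : exists Q : 'I_f.+1 -> {set T}, linkage H A Y Q.
    apply: menger => Z hs; rewrite ltnNge; apply/negP => hle; apply: Hc; by exists Z.
  exact: fan_of_linkage hQ.
case=> Z [hsep hZ].
have FC : [disjoint F & Z :\: F :\ b] by apply/disjointP => v hv; rewrite !inE hv andbF.
have bC : b \notin Z :\: F :\ b by rewrite !inE eqxx.
have [L [shL LA bL]] := shield_of_separator (separates_trim hsep) FC bC.
exists L, (Z :\: F :\ b); split=> //.
by apply: leq_trans hZ; apply: subset_leq_card; apply/subsetP => v; rewrite !inE => /and3P[].
Qed.

End FanOrShield.
End Fans.

Definition propagation_condition (T : finType) (e : rel T) (f : nat) : Prop :=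
  forall A B F : {set T},
    A :|: B :|: F = setT ->
    [disjoint A & B] -> [disjoint A & F] -> [disjoint B & F] ->
    A != set0 -> B != set0 -> #|F| <= f ->
    propagates e f F A B \/ propagates e f F B A.

(* The mixed run, the all-[true] run with faulty [C1] and the all-[false] run with faulty [C2]
   in lockstep; in the latter two the faulty nodes repeat what they send in the mixed run. *)
Section Simulation.
Variables (T : finType) (e : rel T) (alg : algorithm T) (F C1 C2 L : {set T}).

Definition split_input (j : T) : bool := j \in L.

Fixpoint triple_exec (r : nat) :
    (T -> state_t alg) * (T -> state_t alg) * (T -> state_t alg) :=
 match r with
 | 0 => (fun i => @init _ alg i (split_input i), fun i => @init _ alg i true,
         fun i => @init _ alg i false)
 | r'.+1 => let: (s1, s2, s3) := triple_exec r' in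
   (fun i => @trans _ alg i (s1 i) (fun k => if e k i then
        Some (if k \in F then (if i \in L then @send _ alg k (s2 k) i else @send _ alg k (s3 k) i)
              else @send _ alg k (s1 k) i) else None),
    fun i => @trans _ alg i (s2 i) (fun k => if e k i then
        Some (if k \in C1 then @send _ alg k (s1 k) i else @send _ alg k (s2 k) i) else None),
    fun i => @trans _ alg i (s3 i) (fun k => if e k i then
        Some (if k \in C2 then @send _ alg k (s1 k) i else @send _ alg k (s3 k) i) else None))
 end.

Definition adv_mixed r k i := let: (_, s2, s3) := triple_exec r in
  if i \in L then @send _ alg k (s2 k) i else @send _ alg k (s3 k) i.

Definition adv_replay r k i := @send _ alg k ((triple_exec r).1.1 k) i.

Lemma exec_mixed r : exec e F adv_mixed split_input r = (triple_exec r).1.1.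
Proof. by elim: r => [//|r IH] /=; rewrite IH /adv_mixed; case: (triple_exec r) => [[]]. Qed.

Lemma exec_true r : exec e C1 adv_replay (fun _ => true) r = (triple_exec r).1.2.
Proof. by elim: r => [//|r IH] /=; rewrite IH /adv_replay; case: (triple_exec r) => [[]]. Qed.

Lemma exec_false r : exec e C2 adv_replay (fun _ => false) r = (triple_exec r).2.
Proof. by elim: r => [//|r IH] /=; rewrite IH /adv_replay; case: (triple_exec r) => [[]]. Qed.

Lemma mixed_true_agree : shielded e L F C1 ->
  forall r j, j \in L -> (triple_exec r).1.1 j = (triple_exec r).1.2 j.
Proof.
case=> _ _ FC cl; elim=> [|r IH] j hj /=; first by rewrite /split_input hj.
case: (triple_exec r) IH => [[s1 s2] s3] /= IH; rewrite IH //.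
congr (@trans _ alg j _ _); apply: functional_extensionality => k.
case ek: (e k j) => //; congr Some; rewrite hj.
case: (boolP (k \in F)) => hkF; first by rewrite (disjointFr FC hkF).
case: (boolP (k \in C1)) => hkq //.
have : k \in L by move: (cl _ _ ek hj); rewrite (negbTE hkF) (negbTE hkq) /= orbF.
by move=> hkL; rewrite IH.
Qed.

Lemma mixed_false_agree (M : {set T}) : shielded e M F C2 -> [disjoint M & L] ->
  forall r j, j \in M -> (triple_exec r).1.1 j = (triple_exec r).2 j.
Proof.
case=> _ _ FC cl ML; elim=> [|r IH] j hj /=; first by rewrite /split_input (disjointFr ML hj).
case: (triple_exec r) IH => [[s1 s2] s3] /= IH; rewrite IH //.
congr (@trans _ alg j _ _); apply: functional_extensionality => k.
case ek: (e k j) => //; congr Some; rewrite (disjointFr ML hj).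
case: (boolP (k \in F)) => hkF; first by rewrite (disjointFr FC hkF).
case: (boolP (k \in C2)) => hkq //.
have : k \in M by move: (cl _ _ ek hj); rewrite (negbTE hkF) (negbTE hkq) /= orbF.
by move=> hkM; rewrite IH.
Qed.

End Simulation.

Lemma decides_transfer (T : finType) (e : rel T) (alg : algorithm T) (F F' : {set T})
    (adv adv' : nat -> T -> T -> msg_t alg) (inp inp' : T -> bool) (i : T) (c : bool) :
  (forall r, exec e F adv inp r i = exec e F' adv' inp' r i) ->
  decides e F adv inp i c -> decides e F' adv' inp' i c.
Proof.
move=> H [r [h1 h2]]; exists r; split; first by rewrite -H.
by move=> r' hr; rewrite -H; apply: h2.
Qed.

Lemma shielded_pair_contradiction (T : finType) (e : rel T) (f : nat) (alg : algorithm T)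
    (F C1 C2 L M : {set T}) (a b : T) :
  correct_byz_consensus e f alg -> #|F| <= f -> #|C1| <= f -> #|C2| <= f ->
  shielded e L F C1 -> shielded e M F C2 -> [disjoint M & L] ->
  b \in L -> a \in M -> False.
Proof.
move=> cor hF hC1 hC2 shL shM ML hb ha.
case: (shL) (shM) => LF LC1 _ _ [MF MC2 _ _].
have [_ [agree _]] := cor F hF (adv_mixed e alg F C1 C2 L) (split_input L).
have [term1 [_ valid1]] := cor C1 hC1 (adv_replay e alg F C1 C2 L) (fun _ => true).
have [term2 [_ valid2]] := cor C2 hC2 (adv_replay e alg F C1 C2 L) (fun _ => false).
have bC1 : b \notin C1 by rewrite (disjointFr LC1 hb).
have aC2 : a \notin C2 by rewrite (disjointFr MC2 ha).
have [c1 hc1] := term1 b bC1; have [j [_ hj]] := valid1 _ _ bC1 hc1; subst c1.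
have [c2 hc2] := term2 a aC2; have [j' [_ hj']] := valid2 _ _ aC2 hc2; subst c2.
have db : decides e F (adv_mixed e alg F C1 C2 L) (split_input L) b true.
  apply: decides_transfer hc1 => r.
  by rewrite exec_mixed exec_true (mixed_true_agree alg C2 shL r hb).
have da : decides e F (adv_mixed e alg F C1 C2 L) (split_input L) a false.
  apply: decides_transfer hc2 => r.
  by rewrite exec_mixed exec_false (mixed_false_agree alg C1 shM ML r ha).
by have := agree _ _ _ _ (negbT (disjointFr LF hb)) (negbT (disjointFr MF ha)) db da.
Qed.

Lemma necessity (T : finType) (e : rel T) (f : nat) : irreflexive e ->
  byz_consensus_possible e f -> propagation_condition e f.
Proof.
move=> Hirr [alg cor] A B F hU AB AF BF hA hB hF.
apply: NNPP => Hn.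
have [b hbB nfb] : exists2 b, b \in B & ~ fan e f A F b.
  apply: NNPP => H; apply: Hn; left; right => b hb; apply: NNPP => hf.
  by apply: H; exists b.
have [a haA nfa] : exists2 a, a \in A & ~ fan e f B F a.
  apply: NNPP => H; apply: Hn; right; right => a ha; apply: NNPP => hf.
  by apply: H; exists a.
have bA : b \notin A by rewrite (disjointFl AB hbB).
have bF : b \notin F by rewrite (disjointFr BF hbB).
have aB : a \notin B by rewrite (disjointFr AB haA).
have aF : a \notin F by rewrite (disjointFr AF haA).
have [L [C1 [hC1 shL LA hbL]]] := fan_or_shield Hirr bA bF AF nfb.
have [M [C2 [hC2 shM MB haM]]] := fan_or_shield Hirr aB aF BF nfa.
apply: (shielded_pair_contradiction cor hF hC1 hC2 shL shM _ hbL haM).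
apply/disjointP => j hjM hjL.
have : j \in A :|: B :|: F by rewrite hU inE.
by rewrite !inE (disjointFr LA hjL) (disjointFr MB hjM); case: shL => LF _ _ _;
   rewrite (disjointFr LF hjL).
Qed.

Definition asbool (P : Prop) : bool := if excluded_middle_informative P then true else false.

Lemma asboolP (P : Prop) : reflect P (asbool P).
Proof. by rewrite /asbool; case: excluded_middle_informative => h; constructor. Qed.

Section Algorithm.
Variables (T : finType) (e : rel T) (f : nat).

(* A table maps the reversal [i :: ... :: x] of a path from [x] to its owner [i] to the
   value that [x] sent along that path. *)
Definition table := seq T -> option bool.
Definition node_state := (nat * bool * table)%type.

Definition own_table (i : T) (b : bool) : table := fun q => if q == [:: i] then Some b else None.

Definition relay_table (i : T) (v : bool) (m : T -> option table) : table := fun q =>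
  match q with
  | x :: q' => if x == i then
      match q' with
      | [::] => Some v
      | k :: _ => if m k is Some Rk then Rk q' else None
      end
    else None
  | [::] => None
  end.

(* A phase lasts long enough for values to travel along every simple path. *)
Definition phase_len := #|T|.
Definition fault_schedule : seq {set T} := enum {set T}.
(* Each candidate fault set is assumed during two consecutive phases. *)
Definition phase_faults (p : nat) : {set T} := nth set0 fault_schedule (p %/ 2).
Definition total_rounds := (2 * size fault_schedule) * phase_len.

Definition source_component (F : {set T}) :=
  [set s | (s \notin F) && [forall u, (u \notin F) ==> connect (avoid e F) s u]].

Definition witness (i : T) (R : table) (w : bool) : Prop :=
  exists P : 'I_f.+1 -> seq T,
    (forall k, is_Abpath e [set~ i] i (P k) /\ R (rev (P k)) = Some w) /\
    (forall k l, k != l -> forall x, x \in P k -> x \in P l -> x = i).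

Definition reported_true (F : {set T}) (i : T) (R : table) (j : T) : bool :=
  asbool (exists p, [/\ is_Abpath e [set j] i p, excludes F p & R (rev p) = Some true]).

(* The value the fault-free nodes should adopt if [F] is the fault set and [W] gives the
   values of the source component. *)
Definition target_value (F : {set T}) (W : T -> bool) : bool :=
  let S0 := [set j in source_component F | ~~ W j] in
  ([set j in source_component F | W j] != set0) &&
  ((S0 == set0) || ~~ asbool (propagates e f F S0 (~: F :\: S0))).

Definition update_rule (F : {set T}) (i : T) (v : bool) (R : table) : bool :=
  let w := target_value F (reported_true F i R) in if asbool (witness i R w) then w else v.

Definition step (i : T) (st : node_state) (m : T -> option table) : node_state :=
  let: (c, v, R) := st in
  let R' := relay_table i v m in
  if c.+1 %% phase_len == 0 then
    let v' := update_rule (phase_faults (c.+1 %/ phase_len).-1) i v R' in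
    (c.+1, v', own_table i v')
  else (c.+1, v, R').

Definition decision (i : T) (st : node_state) : option bool :=
  if st.1.1 == total_rounds then Some st.1.2 else None.

Definition consensus_alg : algorithm T :=
  @Algorithm T node_state table (fun i b => (0, b, own_table i b)) (fun k st j => st.2)
    step decision.

Definition fault_free_path (F : {set T}) x q := path e x q && all (fun v => v \notin F) (x :: q).

Definition relays_faithfully (F : {set T}) (V : T -> bool) (i : T) (R : table) (t : nat) :=
  forall x q, fault_free_path F x q -> last x q = i -> size q <= t -> R (rev (x :: q)) = Some (V x).

Lemma relay_table_faithful (F : {set T}) (V : T -> bool) (i : T) (m : T -> option table)
    (Rk : T -> table) (t : nat) :
  (forall k, e k i -> k \notin F -> m k = Some (Rk k)) ->
  (forall k, e k i -> k \notin F -> relays_faithfully F V k (Rk k) t) ->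
  relays_faithfully F V i (relay_table i (V i) m) t.+1.
Proof.
move=> hm hg x q; case/lastP: q => [|q y].
  by move=> _ /= ->; rewrite /relay_table /= eqxx.
rewrite last_rcons => hgood hy; subst y; rewrite size_rcons ltnS => hs.
move: hgood; rewrite /fault_free_path -rcons_cons rcons_path all_rcons.
move=> /andP[/andP[hp hek] /andP[hi ha]].
rewrite rev_rcons (lastI x q) rev_rcons /relay_table eqxx.
have hk : last x q \notin F by apply: (allP ha); apply: mem_last.
rewrite (hm _ hek hk) -rev_rcons -lastI.
by apply: (hg _ hek hk) => //; rewrite /fault_free_path hp ha.
Qed.

Section Run.
Variables (F : {set T}) (adv : nat -> T -> T -> table) (input : T -> bool).

Definition run r := exec e F (adv : nat -> T -> T -> msg_t consensus_alg) input r.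

Definition inbox r i : T -> option table :=
  fun k => if e k i then Some (if k \in F then adv r k i else (run r k).2) else None.

Lemma run_succ r i : run r.+1 i = step i (run r i) (inbox r i).
Proof. by []. Qed.

Lemma run_clock r i : (run r i).1.1 = r.
Proof.
elim: r i => [//|r IH] i; rewrite run_succ; move: (IH i).
by case: (run r i) => [[c v] R] /= ->; rewrite /step; case: ifP.
Qed.

Hypothesis phase_len_gt0 : 0 < phase_len.

Definition phase_value p x := (run (p * phase_len) x).1.2.

Lemma decides_run i b :
  decides e F (adv : nat -> T -> T -> msg_t consensus_alg) input i b <->
  b = phase_value (2 * size fault_schedule) i.
Proof.
split=> [[r [h1 _]]|->].
  by move: h1; rewrite /= /decision -/(run r i) run_clock; case: eqP => // -> [<-].
exists total_rounds; split; first by rewrite /= /decision -/(run _ i) run_clock eqxx.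
by move=> r' hr'; rewrite /= /decision -/(run r' i) run_clock (ltn_eqF hr').
Qed.

Lemma phase_len_succ p : p.+1 * phase_len = (p * phase_len + phase_len.-1).+1.
Proof. by rewrite mulSnr -addnS prednK. Qed.

Lemma run_phase_start p i : (run (p * phase_len) i).2 = own_table i (phase_value p i).
Proof.
case: p => [//|p]; rewrite /phase_value phase_len_succ run_succ.
move: (run_clock (p * phase_len + phase_len.-1) i).
by case: (run _ i) => [[c v] R] /= ->; rewrite /step -phase_len_succ modnMl eqxx.
Qed.

Lemma run_within_phase p t : t < phase_len -> forall i,
  (run (p * phase_len + t) i).1.2 = phase_value p i /\
  (i \notin F -> relays_faithfully F (phase_value p) i (run (p * phase_len + t) i).2 t).
Proof.
elim: t => [|t IH] ht i.
  rewrite addn0; split=> // _ x q _ hl; rewrite leqn0 => /nilP hq; subst q.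
  by move: hl => /= ->; rewrite run_phase_start /own_table /= eqxx.
have ht' : t < phase_len by apply: ltnW.
rewrite addnS run_succ; move: (run_clock (p * phase_len + t) i) (IH ht' i).
case: (run _ i) => [[c v] R] /= -> [hv hg]; rewrite /step.
have -> : ((p * phase_len + t).+1 %% phase_len == 0) = false.
  by rewrite -addnS modnMDl modn_small.
split=> // hi; rewrite hv.
apply: (relay_table_faithful (Rk := fun k => (run (p * phase_len + t) k).2)).
  by move=> k hk hkF; rewrite /inbox hk (negbTE hkF).
by move=> k hk hkF; case: (IH ht' k) => _; apply.
Qed.

Lemma run_phase_end p i : exists R,
  phase_value p.+1 i = update_rule (phase_faults p) i (phase_value p i) R /\
  (i \notin F -> relays_faithfully F (phase_value p) i R phase_len).
Proof.
have ht : phase_len.-1 < phase_len by rewrite prednK.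
rewrite /phase_value phase_len_succ run_succ.
move: (run_clock (p * phase_len + phase_len.-1) i) (run_within_phase p ht i).
case: (run _ i) => [[c v] R] /= -> [hv hg].
rewrite /step -phase_len_succ modnMl eqxx /= mulnK //= hv.
exists (relay_table i (phase_value p i) (inbox (p * phase_len + phase_len.-1) i)).
split=> // hi; rewrite -[X in relays_faithfully _ _ _ _ X](prednK phase_len_gt0).
apply: (relay_table_faithful (Rk := fun k => (run (p * phase_len + phase_len.-1) k).2)).
  by move=> k hk hkF; rewrite /inbox hk (negbTE hkF).
by move=> k hk hkF; case: (run_within_phase p ht k) => _; apply.
Qed.

Lemma phase_update p : exists RR : T -> table,
  (forall i, phase_value p.+1 i = update_rule (phase_faults p) i (phase_value p i) (RR i)) /\
  (forall i, i \notin F -> relays_faithfully F (phase_value p) i (RR i) phase_len).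
Proof.
have [RR hRR] := fin_all_exists (run_phase_end p).
by exists RR; split => i; case: (hRR i).
Qed.

End Run.

Section Validity.
Variables (F : {set T}) (V : T -> bool) (RR : T -> table).
Hypothesis card_F : #|F| <= f.
Hypothesis faithful : forall i, i \notin F -> relays_faithfully F V i (RR i) phase_len.

Lemma faithful_simple_path i x q : i \notin F -> path e x q -> all (fun v => v \notin F) (x :: q) ->
  uniq (x :: q) -> last x q = i -> RR i (rev (x :: q)) = Some (V x).
Proof.
move=> hi hp ha hu hl; apply: (faithful hi) => //; first by rewrite /fault_free_path hp ha.
have := max_card (mem (x :: q)); move/card_uniqP: hu => ->; rewrite /phase_len /= => h.
exact: ltnW.
Qed.

(* Pigeonhole: the paths share only the fault-free [i], so at most [#|F| <= f] of them meet [F]. *)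
Lemma fan_fault_free_path i (P : 'I_f.+1 -> seq T) : i \notin F ->
  (forall k l, k != l -> forall x, x \in P k -> x \in P l -> x = i) ->
  exists k, all (fun v => v \notin F) (P k).
Proof.
move=> hi hdis; apply: NNPP => H.
have H' : forall k, exists v, v \in P k /\ v \in F.
  move=> k; apply: NNPP => Hk; apply: H; exists k; apply/allP => v hv.
  by apply/negP => hvF; apply: Hk; exists v.
have [g hg] := fin_all_exists H'.
have ginj : injective g.
  move=> k l hkl; apply/eqP; apply/negPn/negP => hne.
  have := hdis k l hne (g k) (hg k).1; rewrite hkl => /(_ (hg l).1) hgi.
  by move: (hg l).2; rewrite hgi (negbTE hi).
have : #|[set g k | k in 'I_f.+1]| <= #|F|.
  by apply: subset_leq_card; apply/subsetP => v /imsetP [k _ ->]; case: (hg k).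
rewrite card_imset // card_ord => h.
by move: (leq_trans h card_F); rewrite ltnn.
Qed.

Lemma update_rule_valid F' i : i \notin F ->
  exists2 j, j \notin F & update_rule F' i (V i) (RR i) = V j.
Proof.
move=> hi; rewrite /update_rule; case: asboolP => [[P [hP hdis]]|_]; last by exists i.
have [k hk] := fan_fault_free_path hi hdis.
case: (hP k); case: (P k) hk => [//|x q] hall [hx hp hl hu] hRk.
exists x; first by case/andP: hall.
by move: hRk; rewrite (faithful_simple_path hi hp hall hu hl) => -[->].
Qed.

End Validity.
End Algorithm.

Section SourceComponent.
Variables (T : finType) (e : rel T) (f : nat).
Hypothesis cond : propagation_condition e f.
Implicit Types (A F : {set T}).

Lemma partition_propagates A F : #|F| <= f -> [disjoint A & F] -> A != set0 ->
  ~: F :\: A != set0 -> propagates e f F A (~: F :\: A) \/ propagates e f F (~: F :\: A) A.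
Proof.
move=> hF AF hA hB; apply: cond => //.
- apply/setP => v; rewrite !inE; case: (v \in F); rewrite ?orbT //.
  by case: (v \in A).
- by apply/disjointP => v q1; rewrite !inE q1.
- by apply/disjointP => v; rewrite !inE => /andP[_ q1] q2; rewrite q2 in q1.
Qed.

Lemma Abpath_connect A F b p : is_Abpath e A b p -> excludes F p ->
  exists2 x, x \in A & connect (avoid e F) x b.
Proof.
case: p => [//|x q] [hx hp hl _] hex; exists x => //.
by apply/connectP; exists q => //; apply: path_avoid.
Qed.

Lemma propagates_connect A B F b : propagates e f F A B -> b \in B ->
  exists2 x, x \in A & connect (avoid e F) x b.
Proof.
case=> [hB|H] hb; first by rewrite hB inE in hb.
have [P [hP _]] := H b hb; case: (hP ord0) => h1 h2.
exact: Abpath_connect h1 h2.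
Qed.

Lemma source_componentP F s : reflect
  (s \notin F /\ forall u, u \notin F -> connect (avoid e F) s u) (s \in source_component e F).
Proof.
rewrite /source_component inE; apply: (iffP andP) => [[h1 /forallP h2]|[h1 h2]]; split => //.
  by move=> u hu; move: (h2 u); rewrite hu.
by apply/forallP => u; apply/implyP; apply: h2.
Qed.

Lemma source_component_closed F v s : v \notin F -> s \in source_component e F ->
  connect (avoid e F) v s -> v \in source_component e F.
Proof.
move=> hv /source_componentP [hs hall] hc; apply/source_componentP; split => // u hu.
exact: connect_trans hc (hall u hu).
Qed.

(* A node reaching a maximal set of nodes is a source: otherwise the partition into its
   reach and the rest would propagate one way or the other, contradicting maximality. *)
Lemma source_component_nonempty F s0 : #|F| <= f -> s0 \notin F ->
  source_component e F != set0.
Proof.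
move=> hF hs0; apply/set0Pn.
pose reach s := [set u | connect (avoid e F) s u].
have [s hs hmax] := @arg_maxnP T s0 (fun s => s \notin F) (fun s => #|reach s|) hs0.
exists s; apply/source_componentP; split => // u hu; apply: NNPP => hnu.
have hAF : [disjoint reach s & F].
  apply/disjointP => v; rewrite inE => hv hvF.
  by move: (connect_avoid_out hv hs); rewrite hvF.
have hsA : s \in reach s by rewrite inE connect0.
have huB : u \in ~: F :\: reach s by rewrite !inE hu andbT; apply/negP.
have hA0 : reach s != set0 by apply/set0Pn; exists s.
have hB0 : ~: F :\: reach s != set0 by apply/set0Pn; exists u.
case: (partition_propagates hF hAF hA0 hB0) => hp.
  have [x hx hc] := propagates_connect hp huB; apply: hnu.
  by move: hx; rewrite inE => /connect_trans; apply.
have [x hx hc] := propagates_connect hp hsA.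
have hxF : x \notin F by move: hx; rewrite !inE => /andP[_ h].
have hxs : x \notin reach s by move: hx; rewrite !inE => /andP[h _].
have : reach s \proper reach x.
  apply/properP; split.
    by apply/subsetP => v; rewrite !inE => /(connect_trans hc).
  by exists x; rewrite // inE connect0.
move/proper_card => hlt.
by move: (hmax x hxF) => /= h; move: (leq_trans hlt h); rewrite ltnn.
Qed.

Lemma source_component_propagates F : #|F| <= f -> source_component e F != set0 ->
  propagates e f F (source_component e F) (~: F :\: source_component e F).
Proof.
move=> hF hS.
case: (set_0Vmem (~: F :\: source_component e F)) => [->|[u hu]]; first by left.
have hAF : [disjoint source_component e F & F].
  by apply/disjointP => v /source_componentP [h1 _] h2; rewrite h2 in h1.
have hB0 : ~: F :\: source_component e F != set0 by apply/set0Pn; exists u.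
case: (partition_propagates hF hAF hS hB0) => // hp.
case/set0Pn: hS => s hs.
have [x hx hc] := propagates_connect hp hs.
have hxF : x \notin F by move: hx; rewrite in_setD in_setC => /andP[_ h].
by move: hx; rewrite in_setD (source_component_closed hxF hs hc).
Qed.

(* The rest must propagate to [S0]; the paths start in [S1] because whatever reaches a source
   is a source. *)
Lemma split_source_fan F (S0 S1 : {set T}) : #|F| <= f ->
  (forall s, s \in source_component e F -> (s \in S0) != (s \in S1)) ->
  S0 \subset source_component e F -> S1 \subset source_component e F ->
  S0 != set0 -> S1 != set0 -> ~ propagates e f F S0 (~: F :\: S0) ->
  forall s, s \in S0 -> exists P : 'I_f.+1 -> seq T,
      (forall k, [/\ is_Abpath e (~: F :\: S0) s (P k), excludes F (P k) &
                    head s (P k) \in S1]) /\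
      (forall k l, k != l -> forall x, x \in P k -> x \in P l -> x = s).
Proof.
move=> hF hxor hS0 hS1 h0 h1 hnp s hs.
have hAF : [disjoint S0 & F].
  by apply/disjointP => v /(subsetP hS0) /source_componentP [q1 _] q2; rewrite q2 in q1.
have hB0 : ~: F :\: S0 != set0.
  case/set0Pn: h1 => v hv; apply/set0Pn; exists v.
  have hvS := subsetP hS1 _ hv; move: (hxor v hvS); rewrite hv.
  case/source_componentP: hvS => hvF _; rewrite !inE hvF andbT.
  by case: (v \in S0).
case: (partition_propagates hF hAF h0 hB0) => // -[hS0e|H].
  by rewrite hS0e eqxx in h0.
have [P [hP hdis]] := H s hs; exists P; split => // k.
case: (hP k) => ha hex; split => //.
move: ha hex; case: (P k) => [//|y q] [hy hp hl hu] hex /=.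
have hc : connect (avoid e F) y s by apply/connectP; exists q => //; apply: path_avoid.
have hyF : y \notin F by move: hy; rewrite !inE => /andP[].
have hyS : y \in source_component e F := source_component_closed hyF (subsetP hS0 _ hs) hc.
move: (hxor y hyS); move: hy; rewrite !inE => /andP[/negbTE -> _].
by case: (y \in S1).
Qed.

End SourceComponent.

Lemma in_set_in (T : finType) (S : {set T}) (P : pred T) j :
  (j \in [set j in S | P j]) = (j \in S) && P j.
Proof. by rewrite inE. Qed.

Lemma eq_set_in (T : finType) (S : {set T}) (P Q : pred T) :
  {in S, P =1 Q} -> [set j in S | P j] = [set j in S | Q j].
Proof. by move=> H; apply/setP => j; rewrite !in_set_in; case: (boolP (j \in S)) => // /H ->. Qed.

Section Agreement.
Variables (T : finType) (e : rel T) (f : nat).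
Hypothesis cond : propagation_condition e f.
Variables (F : {set T}) (V : T -> bool) (RR : T -> table T).
Hypothesis card_F : #|F| <= f.
Hypothesis faithful : forall i, i \notin F -> relays_faithfully e F V i (RR i) (phase_len T).
Variable i0 : T.
Hypothesis i0F : i0 \notin F.
Local Notation S := (source_component e F).
Local Notation S1 := [set j in S | V j].
Local Notation S0 := [set j in S | ~~ V j].

Lemma reported_true_source i : i \notin F -> {in S, reported_true e F i (RR i) =1 V}.
Proof.
move=> hi j /source_componentP [hjF hall]; case/connectP: (hall i hi) => p hp.
case: (shortenP hp) => p' hp' hu _ hl.
have ha : all (fun v => v \notin F) (j :: p').
  apply/allP; apply: (path_closed_mem (P := fun v => v \notin F)) hp' hjF _.
  by move=> u v /and3P[].
have hpe : path e j p' by apply: sub_path hp' => u v /and3P[].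
have hg := faithful_simple_path faithful hi hpe ha hu (esym hl).
rewrite /reported_true; case hV: (V j).
  apply/asboolP; exists (j :: p'); split => //; first by split => //; rewrite inE.
  by rewrite hg hV.
apply/negbTE/asboolP => -[[|x q] [hab hex hRq]] //.
case: hab => hx hpq hlq huq; move: hx; rewrite inE => /eqP hx; subst x.
by move: hRq; rewrite (faithful_simple_path faithful hi hpq hex huq hlq) hV.
Qed.

Lemma target_value_eq_in (W1 W2 : T -> bool) : {in S, W1 =1 W2} ->
  target_value e f F W1 = target_value e f F W2.
Proof.
move=> h; rewrite /target_value (eq_set_in h).
by rewrite (@eq_set_in _ _ (fun j => ~~ W1 j) (fun j => ~~ W2 j)) // => j /h ->.
Qed.

Lemma update_rule_target i w : i \notin F -> target_value e f F V = w ->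
  (V i = w \/ witness e f i (RR i) w) -> update_rule e f F i (V i) (RR i) = w.
Proof.
move=> hi ht hw; rewrite /update_rule (target_value_eq_in (reported_true_source hi)) ht.
by case: asboolP => // hnw; case: hw => // hw; case: hnw.
Qed.

Lemma witness_of_fan i (A : {set T}) (P : 'I_f.+1 -> seq T) w : i \notin F -> i \notin A ->
  (forall k, is_Abpath e A i (P k) /\ excludes F (P k)) ->
  (forall k l, k != l -> forall x, x \in P k -> x \in P l -> x = i) ->
  (forall k, V (head i (P k)) = w) -> witness e f i (RR i) w.
Proof.
move=> hi hiA hP hdis hV; exists P; split => // k.
have [hab hex] := hP k; move: (hV k) hab hex; case: (P k) => [|x q] //= hVx [hx hp hl hu] hex.
split; first by split => //; rewrite !inE; apply/negP => /eqP hxi; move: hiA; rewrite -hxi hx.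
by rewrite (faithful_simple_path faithful hi hp hex hu hl) hVx.
Qed.

Lemma update_rule_unanimous c : {in S, forall s, V s = c} ->
  forall i, i \notin F -> update_rule e f F i (V i) (RR i) = c.
Proof.
move=> hc i hi.
have hS := source_component_nonempty cond card_F i0F.
have ht : target_value e f F V = c.
  rewrite /target_value; case: c hc => hc.
    have -> : S0 == set0.
      by apply/eqP/setP => j; rewrite in_set_in in_set0; case: (boolP (j \in S)) => // /hc ->.
    rewrite orTb andbT; case/set0Pn: hS => s hs; apply/set0Pn; exists s.
    by rewrite in_set_in hs hc.
  have -> : S1 == set0.
    by apply/eqP/setP => j; rewrite in_set_in in_set0; case: (boolP (j \in S)) => // /hc ->.
  by [].
apply: update_rule_target => //.
case: (boolP (i \in S)) => his; first by left; apply: hc.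
right; have hib : i \in ~: F :\: S by rewrite !in_setD in_setC his hi.
case: (source_component_propagates cond card_F hS) => [h0|H].
  by rewrite h0 in_set0 in hib.
have [P [hP hdis]] := H i hib.
apply: (witness_of_fan (w := c) hi his hP hdis) => k.
by case: (hP k); case: (P k) => [//|x q] [hx _ _ _] _ /=; exact: hc.
Qed.

Lemma target_value_split : S1 != set0 -> S0 != set0 ->
  target_value e f F V = ~~ asbool (propagates e f F S0 (~: F :\: S0)).
Proof. by move=> h1 h0; rewrite /target_value h1 (negbTE h0). Qed.

Lemma update_rule_propagating : S1 != set0 -> S0 != set0 ->
  propagates e f F S0 (~: F :\: S0) ->
  forall i, i \notin F -> update_rule e f F i (V i) (RR i) = false.
Proof.
move=> h1 h0 hp i hi; apply: update_rule_target => //.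
  by rewrite target_value_split //; case: asboolP.
case hVi: (V i); last by left.
have hiS0 : i \notin S0 by rewrite in_set_in hVi andbF.
have hib : i \in ~: F :\: S0 by rewrite in_setD in_setC hiS0 hi.
right; case: hp => [hS0|H]; first by rewrite hS0 in_set0 in hib.
have [P [hP hdis]] := H i hib.
apply: (witness_of_fan (w := false) hi hiS0 hP hdis) => k.
case: (hP k); case: (P k) => [//|x q] [hx _ _ _] _ /=.
by move: hx; rewrite in_set_in => /andP[_ /negbTE].
Qed.

Lemma update_rule_blocked : S1 != set0 -> S0 != set0 ->
  ~ propagates e f F S0 (~: F :\: S0) ->
  forall s, s \in S -> update_rule e f F s (V s) (RR s) = true.
Proof.
move=> h1 h0 hnp s hs.
have hsF : s \notin F by case/source_componentP: hs.
apply: update_rule_target => //.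
  by rewrite target_value_split //; case: asboolP.
case hVs: (V s); [by left | right].
have hxor v : v \in S -> (v \in S0) != (v \in S1).
  by move=> hv; rewrite !in_set_in hv /=; case: (V v).
have hS0s : S0 \subset S by apply/subsetP => v; rewrite in_set_in => /andP[].
have hS1s : S1 \subset S by apply/subsetP => v; rewrite in_set_in => /andP[].
have hs0 : s \in S0 by rewrite in_set_in hs hVs.
have [P [hP hdis]] := split_source_fan cond card_F hxor hS0s hS1s h0 h1 hnp hs0.
have hP' k : is_Abpath e (~: F :\: S0) s (P k) /\ excludes F (P k) by case: (hP k).
have hsn : s \notin ~: F :\: S0 by rewrite in_setD hs0.
apply: (witness_of_fan (w := true) hsF hsn hP' hdis) => k.
by case: (hP k) => _ _; rewrite in_set_in => /andP[].
Qed.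

Lemma update_rule_phase :
  (exists c, forall i, i \notin F -> update_rule e f F i (V i) (RR i) = c) \/
  (forall s, s \in S -> update_rule e f F s (V s) (RR s) = true).
Proof.
case: (eqVneq S1 set0) => [h1|h1].
  left; exists false; apply: update_rule_unanimous => s hs; apply/negbTE/negP => hVs.
  by move/setP: h1 => /(_ s); rewrite in_set_in in_set0 hs hVs.
case: (eqVneq S0 set0) => [h0|h0].
  left; exists true; apply: update_rule_unanimous => s hs; apply/negPn/negP => hVs.
  by move/setP: h0 => /(_ s); rewrite in_set_in in_set0 hs /= hVs.
case: (asboolP (propagates e f F S0 (~: F :\: S0))) => hp.
  by left; exists false; apply: update_rule_propagating.
by right; apply: update_rule_blocked.
Qed.

End Agreement.

Lemma phase_faults_twice (T : finType) (F : {set T}) :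
  exists2 p, p.+2 <= 2 * size (fault_schedule T) &
    phase_faults T p = F /\ phase_faults T p.+1 = F.
Proof.
have hF : F \in fault_schedule T by rewrite mem_enum.
exists (index F (fault_schedule T) * 2).
  by rewrite -addn2 -mulSnr mulnC leq_mul2l index_mem hF orbT.
rewrite /phase_faults mulnK // -addn1 divnMDl // divn_small // addn0.
by rewrite nth_index.
Qed.

Section Sufficiency.
Variables (T : finType) (e : rel T) (f : nat).
Hypotheses (cond : propagation_condition e f) (T_gt0 : 0 < #|T|).
Variables (F : {set T}) (adv : nat -> T -> T -> table T) (input : T -> bool).
Hypothesis card_F : #|F| <= f.
Local Notation value := (phase_value e f F adv input).

Lemma phase_value_valid p i : i \notin F -> exists2 j, j \notin F & value p i = input j.
Proof.
elim: p i => [|p IH] i hi; first by exists i.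
have [RR [hV hG]] := phase_update e f F adv input T_gt0 p.
rewrite hV; have [j hj ->] := update_rule_valid card_F hG (phase_faults T p) hi.
exact: IH.
Qed.

Lemma phase_value_stable p q c : p <= q -> (forall i, i \notin F -> value p i = c) ->
  forall i, i \notin F -> value q i = c.
Proof.
move=> /subnK <-; elim: (q - p) => [//|m IH] hc i hi; rewrite addSn.
have [RR [hV hG]] := phase_update e f F adv input T_gt0 (m + p).
have [j hj hh] := update_rule_valid card_F hG (phase_faults T (m + p)) hi.
by rewrite hV hh IH.
Qed.

Lemma phase_value_agree : exists c, forall i, i \notin F ->
  value (2 * size (fault_schedule T)) i = c.
Proof.
case: (boolP [exists i, i \notin F]) => [/existsP [i0 hi0] | /existsPn hall]; last first.
  by exists true => i hi; move: (hall i); rewrite hi.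
have [p hle [F0 F1]] := phase_faults_twice F.
have [RR [hV hG]] := phase_update e f F adv input T_gt0 p.
have [c0 hc0] : exists c0, forall i, i \notin F -> value p.+2 i = c0.
  case: (update_rule_phase cond card_F hG hi0) => [[c0 hc0]|hs].
    exists c0; apply: (phase_value_stable (leqnSn _)) => i hi.
    by rewrite hV F0; exact: hc0.
  exists true; have [RR' [hV' hG']] := phase_update e f F adv input T_gt0 p.+1.
  move=> i hi; rewrite hV' F1; apply: (update_rule_unanimous cond card_F hG' hi0) => // s hs'.
  by rewrite hV F0; exact: hs.
by exists c0; apply: phase_value_stable hle hc0.
Qed.

End Sufficiency.


Lemma sufficiency (T : finType) (e : rel T) (f : nat) :
  0 < #|T| -> propagation_condition e f -> byz_consensus_possible e f.
Proof.
move=> T_gt0 cond; exists (consensus_alg e f) => F card_F adv input.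
split; [|split].
- by move=> i _; exists (phase_value e f F adv input (2 * size (fault_schedule T)) i);
     apply/(decides_run e f).
- move=> i j b c hi hj /(decides_run e f) -> /(decides_run e f) ->.
  by have [c0 hc0] := phase_value_agree cond T_gt0 adv input card_F; rewrite !hc0.
- move=> i b hi /(decides_run e f) ->.
  by have [j hj ->] := phase_value_valid e T_gt0 adv input card_F (2 * size (fault_schedule T)) hi;
     exists j.
Qed.

Theorem theorem1 (T : finType) (e : rel T) (f : nat)
    (Hirr : irreflexive e) (Hn : 2 <= #|T|) :
  byz_consensus_possible e f <->
  (forall A B F : {set T},
     A :|: B :|: F = setT ->
     [disjoint A & B] -> [disjoint A & F] -> [disjoint B & F] ->
     A != set0 -> B != set0 -> #|F| <= f ->
     propagates e f F A B \/ propagates e f F B A).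
Proof.
split; first exact: necessity.
by apply: sufficiency; apply: ltnW.
Qed.
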